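(* Let $X$ be a real locally convex Hausdorff topological vector space with dual $X^*$. Let $D\subset X$ be nonempty and of the form $$D=\Big\{\sum_{i=1}^k\lambda_iu_i+\sum_{j=1}^\ell\mu_jv_j \ \Big|\ \lambda_i\ge 0\ \forall i,\ \sum_{i=1}^k\lambda_i=1,\ \mu_j\ge 0\ \forall j\Big\}+X_0,$$ where $u_1,\dots,u_k\in X$ ($k\ge1$), $v_1,\dots,v_\ell\in X$, and $X_0\subset X$ is a closed linear subspace. Let $x^*\in X^*$ be such that the problem $\min\{\langle x^*,x\rangle\mid x\in D\}$ has a solution, and let $S(x^* )$ be its solution set. Define $$I(x^* ):=\{i_0\in\{1,\dots,k\}\mid \langle x^*,u_{i_0}\rangle\le\langle x^*,u_i\rangle\ \forall i=1,\dots,k\},\qquad J(x^* ):=\{j_0\in\{1,\dots,\ell\}\mid \langle x^*,v_{j_0}\rangle=0\}.$$ Then $$S(x^* )=\Big\{\sum_{i\in I(x^* )}\lambda_iu_i+\sum_{j\in J(x^* )}\mu_jv_j\ \Big|\ \lambda_i\ge0\ \forall i\in I(x^* ),\ \sum_{i\in I(x^* )}\lambda_i=1,\ \mu_j\ge0\ \forall j\in J(x^* )\Big\}+X_0.$$ In particular, $S(x^* )$ is a generalized polyhedral convex set.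
   Context: $\langle x^*,x\rangle$ denotes the value of $x^*\in X^*$ at $x\in X$. A subset $C\subset X$ is a generalized polyhedral convex set if there exist $x_i^*\in X^*$, $\alpha_i\in\mathbb{R}$, $i=1,\dots,p$, and a closed affine subspace $L\subset X$ with $C=\{x\in L\mid \langle x_i^*,x\rangle\le\alpha_i,\ i=1,\dots,p\}$. A sum over an empty index set is $0$. *)

From HB Require Import structures.
From mathcomp Require Import all_boot all_order all_algebra.
From mathcomp Require Import all_classical all_reals all_analysis.
Set Implicit Arguments. Unset Strict Implicit. Unset Printing Implicit Defensive.
Import Order.TTheory GRing.Theory Num.Theory.
Local Open Scope classical_set_scope.
Local Open Scope ring_scope.

Definition closed_subspace (R : realType) (X : tvsType R) (X0 : set X) : Prop :=
  closed X0 /\ X0 0 /\ (forall (a : R) (x y : X), X0 x -> X0 y -> X0 (a *: x + y)).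

Definition closed_affine_subspace (R : realType) (X : tvsType R) (L : set X) : Prop :=
  exists (a : X) (L0 : set X), closed_subspace L0 /\ L = [set a + y | y in L0].

Definition gen_polyhedral (R : realType) (X : tvsType R) (C : set X) : Prop :=
  exists (p : nat) (xs : 'I_p -> {linear X -> R^o}) (alpha : 'I_p -> R) (L : set X),
    (forall i, continuous (xs i : X -> R^o)) /\ closed_affine_subspace L /\
    C = [set x | L x /\ forall i, xs i x <= alpha i].

Definition hull_plus (R : realType) (X : tvsType R) (k l : nat)
  (P : pred 'I_k) (Q : pred 'I_l) (u : 'I_k -> X) (v : 'I_l -> X) (X0 : set X) : set X :=
  [set x | exists (lam : 'I_k -> R) (mu : 'I_l -> R) (x0 : X),
     (forall i, P i -> 0 <= lam i) /\ \sum_(i < k | P i) lam i = 1 /\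
     (forall j, Q j -> 0 <= mu j) /\ X0 x0 /\
     x = \sum_(i < k | P i) lam i *: u i + \sum_(j < l | Q j) mu j *: v j + x0].

Definition argmin_set (R : realType) (X : tvsType R) (f : X -> R) (D : set X) : set X :=
  [set x | D x /\ forall y, D y -> f x <= f y].

(* Since the minimum of x^* over D is attained, x^* vanishes on X0 and is
   nonnegative on every v_j.  Writing x = sum lam_i u_i + sum mu_j v_j + x0 and
   m = min_i <x^*, u_i>, we get
     <x^*, x> - m = sum lam_i (<x^*, u_i> - m) + sum mu_j <x^*, v_j>,
   a sum of nonnegative terms; it vanishes exactly when lam lives on I(x^* ) and
   mu on J(x^* ), which is the formula for S(x^* ).

   For polyhedrality, every set
     { x | exists t in R^m, x - sum_r t_r w_r in L0, f_i x + sum_r c_ir t_r <= b_i }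
   with L0 a closed subspace and f_i in X^* is generalized polyhedral.  The t_r
   are eliminated one at a time: by Fourier-Motzkin when w_m lies in L0, and
   otherwise by reading off t_m = g (x - sum_(r<m) t_r w_r) for some g in X^*
   vanishing on L0 with g w_m = 1.  Such a g comes from the Hahn-Banach theorem
   (proved with Zorn's lemma), dominated by the gauge of a convex neighbourhood
   of 0 that misses w_m + L0. *)

From HB Require Import structures.
From mathcomp Require Import all_boot all_order all_algebra.
From mathcomp Require Import all_classical all_reals all_analysis.
From mathcomp Require Import ring lra.
Import Order.TTheory GRing.Theory Num.Theory.
Local Open Scope classical_set_scope.
Local Open Scope ring_scope.
Set Implicit Arguments. Unset Strict Implicit. Unset Printing Implicit Defensive.

Section linear_graph.
Variables (R : realType) (X : lmodType R).

(* Partial linear functionals are handled through their graphs, so that a chain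
   of extensions is merged by taking its union. *)
Definition functional_graph (G : set (X * R)) :=
  forall x a b, G (x, a) -> G (x, b) -> a = b.

Definition linear_graph (G : set (X * R)) :=
  forall r x y a b, G (x, a) -> G (y, b) -> G (r *: x + y, r * a + b).

Definition adjoin (G : set (X * R)) (x : X) (c : R) : set (X * R) :=
  [set yb | exists y a t, G (y, a) /\ yb = (y + t *: x, a + t * c)].

Variable G : set (X * R).
Hypothesis linG : linear_graph G.

Lemma linear_graph0 x a : G (x, a) -> G (0, 0).
Proof. by move=> Gxa; have := linG (-1) Gxa Gxa; rewrite scaleN1r mulN1r !addNr. Qed.

Lemma linear_graphD x y a b : G (x, a) -> G (y, b) -> G (x + y, a + b).
Proof. by move=> Gxa Gyb; have := linG 1 Gxa Gyb; rewrite scale1r mul1r. Qed.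

Lemma linear_graphB x y a b : G (x, a) -> G (y, b) -> G (x - y, a - b).
Proof.
by move=> Gxa Gyb; have := linG (-1) Gyb Gxa; rewrite scaleN1r mulN1r !(addrC (- _)).
Qed.

Lemma linear_graphZ r x a : G (x, a) -> G (r *: x, r * a).
Proof. by move=> Gxa; have := linG r Gxa (linear_graph0 Gxa); rewrite !addr0. Qed.

Lemma sub_adjoin x c : G `<=` adjoin G x c.
Proof. by move=> [y a] Gya; exists y, a, 0; rewrite scale0r mul0r !addr0. Qed.

Lemma adjoin_point x c : G (0, 0) -> adjoin G x c (x, c).
Proof. by move=> G00; exists 0, 0, 1; rewrite scale1r mul1r !add0r. Qed.

Lemma adjoin_linear x c : linear_graph (adjoin G x c).
Proof.
move=> r _ _ _ _ [y [a [t [Gya [-> ->]]]]] [y' [a' [t' [Gya' [-> ->]]]]].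
exists (r *: y + y'), (r * a + a'), (r * t + t'); split; first exact: linG.
by congr (_, _); rewrite ?scalerDr ?scalerA ?scalerDl ?mulrDr ?mulrA ?mulrDl addrACA.
Qed.

Lemma adjoin_functional x c : functional_graph G -> ~ (exists a, G (x, a)) ->
  functional_graph (adjoin G x c).
Proof.
move=> funG xG z _ _ [y [a [t [Gya [-> ->]]]]] [y' [a' [t' [Gya' [eyy' ->]]]]].
have [tt'|tt'] := eqVneq t t'.
  by subst t'; move/addIr: eyy' => eyy'; subst y'; rewrite (funG _ _ _ Gya Gya').
have tt'0 : t - t' != 0 by rewrite subr_eq0.
suff ex : x = (t - t')^-1 *: (y' - y).
  by case: xG; exists ((t - t')^-1 * (a' - a)); rewrite ex; apply/linear_graphZ/linear_graphB.
apply: (scalerI tt'0); rewrite scalerA divff // scale1r scalerBl.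
by apply: (addrI y); rewrite addrA eyy' addrK [RHS]addrC subrK.
Qed.

End linear_graph.

Lemma chain_common (T : Type) (F : set (set T)) (G1 G2 : set T) (a b : T) :
  total_on F subset -> F G1 -> F G2 -> G1 a -> G2 b ->
  exists G, [/\ F G, G a & G b].
Proof.
move=> Ftot FG1 FG2 G1a G2b; have [G12|G21] := Ftot _ _ FG1 FG2.
  by exists G2; split => //; exact: G12.
by exists G1; split => //; exact: G21.
Qed.

Section hahn_banach.
Variables (R : realType) (X : lmodType R) (p : X -> R).
Hypothesis p_subadd : forall x y, p (x + y) <= p x + p y.
Hypothesis p_scale : forall r x, 0 < r -> p (r *: x) = r * p x.

Definition dominated_graph (G : set (X * R)) := forall x a, G (x, a) -> a <= p x.

Lemma extension_gap G x : G (0, 0) -> linear_graph G -> dominated_graph G -> exists c,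
  (forall y a, G (y, a) -> a - p (y - x) <= c) /\
  (forall z b, G (z, b) -> c <= p (z + x) - b).
Proof.
move=> G00 linG domG.
pose S := [set ya.2 - p (ya.1 - x) | ya in G].
have S_ub z b : G (z, b) -> ubound S (p (z + x) - b).
  move=> Gzb _ [[y a] Gya <-] /=; rewrite lerBrDr addrAC lerBlDr.
  apply: le_trans (p_subadd _ _).
  have -> : z + x + (y - x) = y + z by rewrite addrACA addrN addr0 addrC.
  by apply: domG; exact: (linear_graphD linG Gya Gzb).
have S0 : S !=set0 by exists (0 - p (0 - x)), (0, 0).
exists (sup S); split => [y a Gya | z b Gzb]; last exact/ge_sup/S_ub.
by apply: sup_upper_bound; [split=> //; exists (p (0 + x) - 0); exact: S_ub | exists (y, a)].
Qed.

Lemma adjoin_dominated G x c : linear_graph G -> dominated_graph G ->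
  (forall y a, G (y, a) -> a - p (y - x) <= c) ->
  (forall z b, G (z, b) -> c <= p (z + x) - b) ->
  dominated_graph (adjoin G x c).
Proof.
move=> linG domG c_ge c_le _ _ [y [a [t [Gya [-> ->]]]]].
have [t0|t0|->] := ltrgt0P t; last by rewrite scale0r mul0r !addr0; exact: domG.
- have := c_le _ _ (linear_graphZ linG t^-1 Gya).
  rewrite -(ler_pM2l t0) mulrBr mulrA divff ?gt_eqF // mul1r.
  rewrite -p_scale // scalerDr scalerA divff ?gt_eqF // scale1r.
  by rewrite lerBrDl mulrC.
- have s0 : 0 < - t by rewrite oppr_gt0.
  have := c_ge _ _ (linear_graphZ linG (- t)^-1 Gya).
  rewrite -(ler_pM2l s0) mulrBr mulrA divff ?gt_eqF // mul1r.
  rewrite -p_scale // scalerBr scalerA divff ?gt_eqF // scale1r.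
  by rewrite scaleNr opprK mulNr; lra.
Qed.

Variable G0 : set (X * R).
Hypotheses (G0_00 : G0 (0, 0)) (G0_fun : functional_graph G0)
  (G0_lin : linear_graph G0) (G0_dom : dominated_graph G0).

Definition dominated_extension (G : set (X * R)) :=
  [/\ functional_graph G, linear_graph G, dominated_graph G & G0 `<=` G].

Lemma dominated_extension_adjoin G x : dominated_extension G ->
  ~ (exists a, G (x, a)) -> exists2 B, dominated_extension B & G `<` B.
Proof.
move=> [funG linG domG G0G] xG.
have [c [c_ge c_le]] := extension_gap x (G0G _ G0_00) linG domG.
exists (adjoin G x c).
  split; [exact: adjoin_functional | exact: adjoin_linear |
          exact: adjoin_dominated | exact: (subset_trans G0G (sub_adjoin x c))].
split; first exact: (sub_adjoin x c).
by move=> /(_ (x, c)) Gxc; apply: xG; exists c; apply/Gxc/adjoin_point/G0G.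
Qed.

Lemma dominated_extension_bigcup F :
  (forall G, F G -> G = set0 \/ dominated_extension G) -> total_on F subset ->
  (exists2 G, F G & dominated_extension G) ->
  dominated_extension (\bigcup_(G in F) G).
Proof.
move=> FP Ftot [G1 FG1 extG1].
have ext_of G ya : F G -> G ya -> dominated_extension G.
  by move=> FG Gya; case: (FP _ FG) => // G_0; rewrite G_0 in Gya.
split.
- move=> x a b [G2 FG2 G2a] [G3 FG3 G3b].
  have [G [FG Ga Gb]] := chain_common Ftot FG2 FG3 G2a G3b.
  by case: (ext_of _ _ FG Ga) => funG _ _ _; exact: (funG _ _ _ Ga Gb).
- move=> r x y a b [G2 FG2 G2a] [G3 FG3 G3b].
  have [G [FG Ga Gb]] := chain_common Ftot FG2 FG3 G2a G3b.
  by exists G => //; case: (ext_of _ _ FG Ga) => _ linG _ _; exact: linG.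
- by move=> x a [G FG Gxa]; case: (ext_of _ _ FG Gxa) => _ _ domG _; exact: domG.
- by move=> ya G0ya; exists G1 => //; case: extG1 => _ _ _; apply.
Qed.

Lemma total_dominated_extension :
  exists2 G, dominated_extension G & forall x, exists a, G (x, a).
Proof.
(* [set0] is allowed so that the empty chain has an upper bound. *)
pose P G := G = set0 \/ dominated_extension G.
have [G [PG Gmax]] : exists G, P G /\ forall B, G `<` B -> ~ P B.
  apply: Zorn_bigcup => F FP Ftot.
  have [extF|noext] := pselect (exists2 G, F G & dominated_extension G).
    by right; apply: dominated_extension_bigcup.
  left; apply/seteqP; split => // ya [G FG Gya].
  case: (FP _ FG) => [G_0|extG]; first by rewrite G_0 in Gya.
  by case: noext; exists G.
have extG : dominated_extension G.
  case: PG => // G_0; case: (Gmax G0); last by right; split.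
  by rewrite G_0; split; [exact: sub0set | move/(_ (0, 0) G0_00)].
exists G => // x; apply: contrapT => xG.
have [B extB GB] := dominated_extension_adjoin extG xG.
by apply: (Gmax B) => //; right.
Qed.

Theorem hahn_banach : exists F : X -> R,
  [/\ forall r x y, F (r *: x + y) = r * F x + F y,
      forall x, F x <= p x &
      forall x a, G0 (x, a) -> F x = a].
Proof.
have [G [funG linG domG G0G] Gtot] := total_dominated_extension.
have [F GF] := choice Gtot.
exists F; split.
- by move=> r x y; apply: (funG _ _ _ (GF _)); apply: linG; exact: GF.
- by move=> x; exact: domG (GF x).
- by move=> x a G0xa; apply: (funG _ _ _ (GF x)); exact: G0G.
Qed.

End hahn_banach.

Section tvs_continuity.
Variables (R : numFieldType) (X : tvsType R).

Lemma tvs_continuousD (T : topologicalType) (f g : T -> X) :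
  continuous f -> continuous g -> continuous (fun z => f z + g z).
Proof.
move=> cf cg x.
apply: (@continuous_comp _ _ _ (fun z => (f z, g z)) (fun p : X * X => p.1 + p.2)).
  exact: (cvg_pair (cf x) (cg x)).
exact: add_continuous.
Qed.

Lemma tvs_continuousZ (T : topologicalType) (s : T -> R^o) (f : T -> X) :
  continuous s -> continuous f -> continuous (fun z => s z *: f z).
Proof.
move=> cs cf x.
apply: (@continuous_comp _ _ _ (fun z => (s z, f z)) (fun p : R^o * X => p.1 *: p.2)).
  exact: (cvg_pair (cs x) (cf x)).
exact: scale_continuous.
Qed.

End tvs_continuity.

Section tvs_facts.
Variables (R : realType) (X : tvsType R).

Lemma translation_continuous (a : X) : continuous (fun z : X => z + a).
Proof. by apply: tvs_continuousD => [z|]; [exact: cvg_id | exact: cst_continuous]. Qed.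

Lemma open_convex_nbhs0 (W : set X) : nbhs 0 W -> exists U : set X,
  [/\ U `<=` W, open U, U 0 &
      forall x y t, U x -> U y -> 0 <= t -> t <= 1 -> U (t *: x + (1 - t) *: y)].
Proof.
have [B B_convex [B_open B_basis]] := @locally_convex R X.
move=> /(B_basis 0) [U [BU U0] UW]; exists U; split => //; first exact: B_open.
move=> x y t Ux Uy t0 t1.
have := B_convex U (mem_set BU) x y (Itv01 t0 t1) (mem_set Ux) (mem_set Uy).
by rewrite inE.
Qed.

Lemma closed_subspaceZ (S : set X) r x : closed_subspace S -> S x -> S (r *: x).
Proof. by move=> [_ [S0 S_lin]] Sx; have := S_lin r _ _ Sx S0; rewrite addr0. Qed.

Lemma closed_subspaceD (S : set X) x y : closed_subspace S -> S x -> S y -> S (x + y).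
Proof. by move=> [_ [_ S_lin]] Sx Sy; have := S_lin 1 _ _ Sx Sy; rewrite scale1r. Qed.

Lemma closed_subspaceB (S : set X) x y : closed_subspace S -> S x -> S y -> S (x - y).
Proof.
by move=> S_sub Sx Sy; rewrite -scaleN1r; apply: closed_subspaceD => //; exact: closed_subspaceZ.
Qed.

Definition continuous_linear_form (f : X -> R) :=
  continuous (f : X -> R^o) /\ forall r x y, f (r *: x + y) = r * f x + f y.

Lemma continuous_linear_form_comb (f g : X -> R) (a b : R) :
  continuous_linear_form f -> continuous_linear_form g ->
  continuous_linear_form (fun x => a * f x + b * g x).
Proof.
move=> [cf lf] [cg lg]; split; last by move=> r x y; rewrite lf lg; ring.
apply: (@tvs_continuousD _ R^o X (fun x => a *: (f x : R^o)) (fun x => b *: (g x : R^o)));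
  by apply: tvs_continuousZ => // ?; exact: cst_continuous.
Qed.

Definition linfun_of (f : X -> R) (f_lin : forall r x y, f (r *: x + y) = r * f x + f y) :
  {linear X -> R^o} :=
  HB.pack_for {linear X -> R^o} f (GRing.isLinear.Build R X R^o *:%R f f_lin).

Lemma closed_subspace_shear (L0 : set X) (g : X -> R) (a : X) :
  closed_subspace L0 -> continuous_linear_form g ->
  closed_subspace [set z | L0 (z - g z *: a)].
Proof.
move=> [L0_closed [L00 L0_lin]] [g_cont g_lin]; split; [|split].
- have -> : [set z | L0 (z - g z *: a)] = (fun z => z + g z *: (- a)) @^-1` L0.
    by apply/seteqP; split => z; rewrite /= scalerN.
  apply: preimage_closed => // z _; apply: tvs_continuousD => [?|]; first exact: cvg_id.
  by apply: tvs_continuousZ => // ?; exact: cst_continuous.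
- by rewrite /= (linear0 (linfun_of g_lin) : g 0 = 0) scale0r subr0.
- move=> r x y L0x L0y; rewrite /= g_lin.
  by rewrite scalerDl -scalerA opprD addrACA -scalerBr; exact: L0_lin.
Qed.

Lemma linear_continuous_of_ubound (g : {linear X -> R^o}) (U : set X) :
  nbhs 0 U -> (forall z, U z -> g z <= 1) -> continuous g.
Proof.
move=> U0 gU x; apply/cvgrPdist_lt => e e0.
pose V := [set z | U z /\ U (- z)].
have gV z : V z -> `|g z| <= 1.
  by move=> [Uz Unz]; rewrite ler_norml gU // andbT lerNl -linearN; exact: gU.
have V0 : nbhs (0 : X) V.
  apply: filterI => //; have := opp_continuous (0 : X) U; rewrite oppr0; exact.
pose h z := (2 / e) *: (z - x).
have h_cont : continuous h.
  by apply: tvs_continuousZ => //; [exact: cst_continuous | exact: translation_continuous].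
have := h_cont x V; rewrite /h subrr scaler0 => /(_ V0) hV.
near=> z; have /gV : V (h z) by near: z.
rewrite /h linearZ /= linearB /= normrZ gtr0_norm ?divr_gt0 //.
rewrite -ler_pdivlMl ?divr_gt0 // invf_div mulr1 distrC => gzx.
by apply: le_lt_trans gzx _; rewrite ltr_pdivrMr // ltr_pMr // ltr1n.
Unshelve. all: by end_near.
Qed.

End tvs_facts.

Section gauge.
Variables (R : realType) (X : tvsType R) (U : set X).
Hypotheses (U_open : open U) (U0 : U 0)
  (U_convex : forall x y t, U x -> U y -> 0 <= t -> t <= 1 -> U (t *: x + (1 - t) *: y)).

Definition gauge_set (x : X) := [set t : R | 0 < t /\ U (t^-1 *: x)].
Definition gauge (x : X) := inf (gauge_set x).

Lemma gauge_set_neq0 x : gauge_set x !=set0.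
Proof.
have c : continuous (fun s : R^o => s *: x).
  by apply: tvs_continuousZ => [s|]; [exact: cvg_id | exact: cst_continuous].
have Ux : nbhs (0 *: x) U by rewrite scale0r; exact: open_nbhs_nbhs.
have /nbhs_ballP [e e0 He] := c 0 _ Ux.
exists (e / 2)^-1; split; first by rewrite invr_gt0 divr_gt0.
rewrite invrK; apply: (He (e / 2)).
rewrite /ball /= sub0r normrN gtr0_norm ?divr_gt0 //.
by rewrite ltr_pdivrMr // ltr_pMr // ltr1n.
Qed.

Let gauge_set_has_inf x : has_inf (gauge_set x).
Proof. by split; [exact: gauge_set_neq0 | exists 0 => t [t0 _]; exact: ltW]. Qed.

Lemma gauge_ge0 x : 0 <= gauge x.
Proof. by apply: lb_le_inf; [exact: gauge_set_neq0 | move=> t [t0 _]; exact: ltW]. Qed.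

Lemma gauge_le x t : gauge_set x t -> gauge x <= t.
Proof. by move=> xt; exact: (ge_inf (gauge_set_has_inf x).2). Qed.

Lemma gauge_le1 x : U x -> gauge x <= 1.
Proof. by move=> Ux; apply: gauge_le; split => //; rewrite invr1 scale1r. Qed.

Lemma gauge_lt1 x : gauge x < 1 -> U x.
Proof.
move=> gx1; have gx1' : 0 < 1 - gauge x by rewrite subr_gt0.
have [t [t0 Ut] tlt] := inf_adherent gx1' (gauge_set_has_inf x).
have t1 : t <= 1 by move: tlt; rewrite /gauge addrC subrK => /ltW.
have := U_convex Ut U0 (ltW t0) t1.
by rewrite scaler0 addr0 scalerA divff ?gt_eqF // scale1r.
Qed.

Let gauge_scale_le r x : 0 < r -> gauge (r *: x) <= r * gauge x.
Proof.
move=> r0; rewrite -ler_pdivrMl //; apply: lb_le_inf; first exact: gauge_set_neq0.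
move=> t [t0 Ut]; rewrite ler_pdivrMl //; apply: gauge_le; split.
  exact: mulr_gt0.
by rewrite scalerA invfM mulrAC mulVf ?gt_eqF // mul1r.
Qed.

Lemma gauge_scale r x : 0 < r -> gauge (r *: x) = r * gauge x.
Proof.
move=> r0; apply/eqP; rewrite eq_le gauge_scale_le //=.
have := @gauge_scale_le r^-1 (r *: x); rewrite invr_gt0 => /(_ r0).
by rewrite scalerA mulVf ?gt_eqF // scale1r ler_pdivlMl.
Qed.

Lemma gauge_subadd x y : gauge (x + y) <= gauge x + gauge y.
Proof.
apply/ler_addgt0Pr => e e0; have e20 : 0 < e / 2 by rewrite divr_gt0.
have [s [s0 Us] slt] := inf_adherent e20 (gauge_set_has_inf x).
have [t [t0 Ut] tlt] := inf_adherent e20 (gauge_set_has_inf y).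
have st0 : 0 < s + t by rewrite addr_gt0.
apply: (@le_trans _ _ (s + t)); last first.
  have -> : gauge x + gauge y + e = (gauge x + e / 2) + (gauge y + e / 2) by field.
  by apply: lerD; exact: ltW.
apply: gauge_le; split => //.
(* [(s + t)^-1 (x + y)] is the convex combination of [s^-1 x] and [t^-1 y]
   with weight [s / (s + t)]. *)
have w0 : 0 <= s / (s + t) by rewrite divr_ge0 // ltW.
have w1 : s / (s + t) <= 1 by rewrite ler_pdivrMr // mul1r lerDl ltW.
have := U_convex Us Ut w0 w1.
congr U; rewrite !scalerA scalerDr; congr (_ *: _ + _ *: _).
  by rewrite mulrAC divff ?gt_eqF // mul1r.
by field; rewrite !gt_eqF.
Qed.

End gauge.

Section separation.
Variables (R : realType) (X : tvsType R) (X0 : set X).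
Hypothesis X0_sub : closed_subspace X0.

Lemma closed_subspace_separation x0 : ~ X0 x0 -> exists g : X -> R,
  [/\ continuous_linear_form g, (forall y, X0 y -> g y = 0) & g x0 = 1].
Proof.
move=> x0X0; have [X0_closed [X00 X0_lin]] := X0_sub.
pose W := [set z | ~ X0 (z - x0)].
have W_open : open W.
  apply: (@open_comp _ _ (fun z => z - x0) (~` X0)); last exact: closed_openC.
  by move=> z _; exact: translation_continuous.
have W0 : W 0.
  by rewrite /W /= sub0r => /(closed_subspaceZ (-1) X0_sub); rewrite scaleN1r opprK.
have [U [UW U_open U0 U_convex]] := open_convex_nbhs0 (open_nbhs_nbhs (conj W_open W0)).
pose G := [set ya : X * R | X0 ya.1 /\ ya.2 = 0].
have G_lin : linear_graph G.
  by move=> r y y' a a' [/= X0y ->] [/= X0y' ->]; split; [exact: X0_lin | rewrite /= mulr0 addr0].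
have G_fun : functional_graph G by move=> y a b [_ /= ->] [_ /= ->].
have G00 : G (0, 0) by [].
(* G0 is the graph of y + t x0 |-> t on X0 + R x0. *)
pose G0 := adjoin G x0 1.
have G0_dom : dominated_graph (gauge U) G0.
  move=> _ _ [y [a [t [[/= X0y ->] [-> ->]]]]]; rewrite add0r mulr1.
  have [t0|t0] := leP t 0; first exact: le_trans t0 (gauge_ge0 U_open U0 _).
  have -> : y + t *: x0 = t *: (t^-1 *: y + x0).
    by rewrite scalerDr scalerA divff ?gt_eqF // scale1r.
  rewrite gauge_scale // -{1}(mulr1 t) ler_pM2l // leNgt.
  apply/negP => /(gauge_lt1 U_open U0 U_convex) /UW; rewrite /W /= addrK; apply.
  exact: closed_subspaceZ.
have G0_fun : functional_graph G0 by apply: adjoin_functional => // -[a [X0x0 _]].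
have G0_lin : linear_graph G0 by exact: adjoin_linear.
have G0_00 : G0 (0, 0) by exact: sub_adjoin.
have [F [F_lin F_gauge F_G0]] := hahn_banach (gauge_subadd U_open U0 U_convex)
  (gauge_scale U_open U0) G0_00 G0_fun G0_lin G0_dom.
exists F; split.
- split => //; apply: (@linear_continuous_of_ubound _ _ (linfun_of F_lin) U).
    exact: open_nbhs_nbhs.
  by move=> z Uz; apply: le_trans (F_gauge z) (gauge_le1 U_open U0 Uz).
- by move=> y X0y; apply: F_G0; apply: sub_adjoin.
- by apply: F_G0; apply: adjoin_point.
Qed.

End separation.

Lemma fourier_motzkin_step (R : realFieldType) (I : finType) (c b : I -> R) :
  (forall i, c i = 0 -> 0 <= b i) ->
  (forall i j, 0 < c i -> c j < 0 -> 0 <= - c j * b i + c i * b j) ->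
  exists s, forall i, c i * s <= b i.
Proof.
move=> b_ge0 b_pair; pose s0 := - \sum_i `|b i / c i|.
exists (\big[Order.max/s0]_(j | c j < 0) (b j / c j)) => i.
have [ci0|ci0|ci0] := ltrgt0P (c i); last by rewrite ci0 mul0r; exact: b_ge0.
- rewrite mulrC -ler_pdivlMr //; apply: bigmax_le => [|j cj0].
    apply: (@le_trans _ _ (- `|b i / c i|)); last by rewrite lerNl -normrN ler_norm.
    by rewrite lerN2 (bigD1 i) //= lerDl; apply: sumr_ge0 => ? _; exact: normr_ge0.
  have cj_neq0 : c j != 0 by rewrite lt_eqF.
  have := b_pair i j ci0 cj0; rewrite -{1}(divfK cj_neq0 (b j)) ler_pdivlMr //.
  move: (b j / c j) => q.
  have -> : - c j * b i + c i * (q * c j) = - c j * (b i - q * c i) by ring.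
  by rewrite pmulr_rge0 ?oppr_gt0 // subr_ge0.
- have := @le_bigmax_cond _ _ I s0 i (fun j => c j < 0) (fun j => b j / c j) ci0.
  by rewrite -(ler_nM2l ci0) mulrCA divff ?lt_eqF // mulr1.
Qed.

Section shadow.
Variables (R : realType) (X : tvsType R).

(* The projection onto X of a generalized polyhedral subset of X * R^m; only
   t_0, ..., t_(m-1) matter. *)
Definition shadow (m : nat) (L0 : set X) (w : nat -> X) (I : finType)
    (f : I -> X -> R) (c : I -> nat -> R) (b : I -> R) : set X :=
  [set x | exists t : nat -> R, L0 (x - \sum_(r < m) t r *: w r) /\
     forall i, f i x + \sum_(r < m) c i r * t r <= b i].

Definition shadow_form (m : nat) (w : nat -> X) (S : set X) :=
  exists (L0 : set X) (I : finType) (f : I -> X -> R) (c : I -> nat -> R) (b : I -> R),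
    [/\ closed_subspace L0, forall i, continuous_linear_form (f i) &
        S = shadow m L0 w f c b].

End shadow.

Definition upd (T : Type) (t : nat -> T) (m : nat) (s : T) (r : nat) : T :=
  if r == m then s else t r.

Lemma sum_upd (T : Type) (V : zmodType) (h : nat -> T -> V) t m s :
  \sum_(r < m.+1) h r (upd t m s r) = \sum_(r < m) h r (t r) + h m s.
Proof.
rewrite big_ord_recr /= /upd eqxx; congr (_ + _).
by apply: eq_bigr => r _ /=; rewrite ltn_eqF.
Qed.

Section fourier_motzkin.
Variables (R : realType) (I : finType).

(* The pair (i, j) stands for wt.1 * (row i) + wt.2 * (row j): with fm_weights
   this is row i itself when c_i = 0, the combination eliminating t_m when
   c_i > 0 > c_j, and the trivial constraint 0 <= 0 otherwise. *)
Definition pair_comb (wt : I * I -> R * R) (g : I -> R) (e : I * I) : R :=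
  (wt e).1 * g e.1 + (wt e).2 * g e.2.

Definition fm_weights (cm : I -> R) (e : I * I) : R * R :=
  if cm e.1 == 0 then (1, 0)
  else if (0 < cm e.1) && (cm e.2 < 0) then (- cm e.2, cm e.1) else (0, 0).

Lemma fm_weights_ge0 cm e : 0 <= (fm_weights cm e).1 /\ 0 <= (fm_weights cm e).2.
Proof.
rewrite /fm_weights; case: eqP => //= _; case: ifP => //= /andP[/ltW ? ?].
by rewrite oppr_ge0 ltW.
Qed.

Lemma fm_weights_elim cm e : pair_comb (fm_weights cm) cm e = 0.
Proof.
rewrite /pair_comb /fm_weights; case: eqP => [->|_] /=; first by rewrite mulr0 mul0r addr0.
by case: ifP => _ /=; [ring | rewrite !mul0r addr0].
Qed.

Variables (X : tvsType R) (m : nat) (L0 : set X) (w : nat -> X).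
Hypotheses (L0_sub : closed_subspace L0) (L0w : L0 (w m)).
Variables (f : I -> X -> R) (c : I -> nat -> R) (b : I -> R).

Definition comb_shadow (wt : I * I -> R * R) : set X :=
  shadow m L0 w (fun e x => pair_comb wt (f^~ x) e) (fun e r => pair_comb wt (c^~ r) e)
    (pair_comb wt b).

Let sum_comb wt e (t : nat -> R) :
  \sum_(r < m) pair_comb wt (c^~ r) e * t r =
  pair_comb wt (fun i => \sum_(r < m) c i r * t r) e.
Proof.
by rewrite /pair_comb !mulr_sumr -big_split; apply: eq_bigr => r _ /=; ring.
Qed.

Lemma shadow_sub_comb wt : (forall e, 0 <= (wt e).1 /\ 0 <= (wt e).2) ->
  (forall e, pair_comb wt (c^~ m) e = 0) ->
  shadow m.+1 L0 w f c b `<=` comb_shadow wt.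
Proof.
move=> wt_ge0 wt_elim x [t [L0t Ht]]; exists t; split.
  move: L0t; rewrite big_ord_recr /= opprD addrA => L0t.
  by rewrite -(subrK (t m *: w m) (_ - _)); apply: closed_subspaceD L0t _ => //;
    exact: closed_subspaceZ.
move=> e; rewrite sum_comb; have [w1_ge0 w2_ge0] := wt_ge0 e.
have := wt_elim e; have := Ht e.1; have := Ht e.2; rewrite /pair_comb !big_ord_recr /=.
move=> h2 h1 elim; have := ler_wpM2l w1_ge0 h1; have := ler_wpM2l w2_ge0 h2.
have : ((wt e).1 * c e.1 m + (wt e).2 * c e.2 m) * t m = 0 by rewrite elim mul0r.
lra.
Qed.

Lemma comb_shadow_fm_sub : comb_shadow (fm_weights (c^~ m)) `<=` shadow m.+1 L0 w f c b.
Proof.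
move=> x [t [L0t Ht]].
pose slack i := b i - f i x - \sum_(r < m) c i r * t r.
have slack_comb e : 0 <= pair_comb (fm_weights (c^~ m)) slack e.
  by have := Ht e; rewrite sum_comb /pair_comb /slack; lra.
have [s Hs] : exists s, forall i, c i m * s <= slack i.
  apply: fourier_motzkin_step => [i ci0 | i j ci0 cj0].
    by have := slack_comb (i, i); rewrite /pair_comb /fm_weights /= ci0 eqxx mul1r mul0r addr0.
  by have := slack_comb (i, j); rewrite /pair_comb /fm_weights /= gt_eqF // ci0 cj0.
exists (upd t m s); split.
  rewrite (sum_upd (fun r v => v *: w r)) opprD addrA.
  by apply: closed_subspaceB L0t _ => //; exact: closed_subspaceZ.
by move=> i; rewrite (sum_upd (fun r v => c i r * v)); have := Hs i; rewrite /slack; lra.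
Qed.

Lemma shadow_elim_in : (forall i, continuous_linear_form (f i)) ->
  shadow_form m w (shadow m.+1 L0 w f c b).
Proof.
move=> f_cl; exists L0, (I * I)%type, (fun e x => pair_comb (fm_weights (c^~ m)) (f^~ x) e),
  (fun e r => pair_comb (fm_weights (c^~ m)) (c^~ r) e), (pair_comb (fm_weights (c^~ m)) b).
split => //; first by move=> e; exact: continuous_linear_form_comb.
apply/seteqP; split; last exact: comb_shadow_fm_sub.
by apply: shadow_sub_comb => e; [exact: fm_weights_ge0 | exact: fm_weights_elim].
Qed.

End fourier_motzkin.

Section shadow_elimination.
Variables (R : realType) (X : tvsType R).

Lemma shadow_elim_notin m (L0 : set X) w (I : finType) f c (b : I -> R) :
  closed_subspace L0 -> (forall i, continuous_linear_form (f i)) -> ~ L0 (w m) ->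
  shadow_form m w (shadow m.+1 L0 w f c b).
Proof.
move=> L0_sub f_cl L0w.
have [g [[g_cont g_lin] gL0 gw]] := closed_subspace_separation L0_sub L0w.
pose G := linfun_of g_lin.
have gB x y : g (x - y) = g x - g y := linearB G x y.
have gZ r x : g (r *: x) = r * g x := linearZ_LR G r x.
have g_sum (t : nat -> R) : g (\sum_(r < m) t r *: w r) = \sum_(r < m) t r * g (w r).
  by elim/big_rec2: _ => [|r y1 y2 _ <-]; [exact: (linear0 G) | rewrite g_lin].
pose L0' := [set z | L0 (z - g z *: w m)].
have L0'_sub : closed_subspace L0' := closed_subspace_shear (w m) L0_sub (conj g_cont g_lin).
pose f' i x := f i x + c i m * g x.
pose c' i r := c i r - c i m * g (w r).
(* Since g kills L0 and g (w m) = 1, x - sum_(r<=m) t_r w_r in L0 forces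
   t_m = g (x - sum_(r<m) t_r w_r). *)
have shift x (t : nat -> R) i : f' i x + \sum_(r < m) c' i r * t r =
    f i x + \sum_(r < m) c i r * t r + c i m * g (x - \sum_(r < m) t r *: w r).
  rewrite gB g_sum mulrBr mulr_sumr /f' /c'.
  under eq_bigr do rewrite mulrBl.
  rewrite sumrB; have -> : \sum_(r < m) c i m * g (w r) * t r =
      \sum_(r < m) c i m * (t r * g (w r)) by apply: eq_bigr => r _; ring.
  ring.
exists L0', I, f', c', b; split => //.
  move=> i; have := continuous_linear_form_comb 1 (c i m) (f_cl i) (conj g_cont g_lin).
  by congr continuous_linear_form; apply/funext => x; rewrite mul1r.
apply/seteqP; split => x [t [L0t Ht]].
  set z := x - \sum_(r < m) t r *: w r.
  have L0z : L0 (z - t m *: w m) by move: L0t; rewrite big_ord_recr /= opprD addrA.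
  have gz : g z = t m.
    by have /eqP := gL0 _ L0z; rewrite gB gZ gw mulr1 subr_eq0 => /eqP.
  exists t; split; first by rewrite /L0' /= gz.
  by move=> i; have := Ht i; rewrite big_ord_recr /= shift -/z gz; lra.
exists (upd t m (g (x - \sum_(r < m) t r *: w r))); split.
  by rewrite (sum_upd (fun r v => v *: w r)) opprD addrA.
by move=> i; rewrite (sum_upd (fun r v => c i r * v)); have := Ht i; rewrite shift; lra.
Qed.

Lemma shadow_form_elim m w (S : set X) : shadow_form m.+1 w S -> shadow_form m w S.
Proof.
move=> [L0 [I [f [c [b [L0_sub f_cl ->]]]]]].
have [L0w|L0w] := pselect (L0 (w m)); first exact: shadow_elim_in.
exact: shadow_elim_notin.
Qed.

Lemma shadow_form_gen_polyhedral m w (S : set X) : shadow_form m w S -> gen_polyhedral S.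
Proof.
elim: m S => [|m IHm] S; last by move/shadow_form_elim; exact: IHm.
move=> [L0 [I [f [c [b [L0_sub f_cl ->]]]]]].
pose xs (j : 'I_#|I|) := linfun_of (f_cl (enum_val j)).2.
exists #|I|, xs, (fun j => b (enum_val j)), [set 0 + y | y in L0]; split; [|split].
- by move=> j; exact: (f_cl (enum_val j)).1.
- by exists 0, L0.
apply/seteqP; split => x.
  move=> [t []]; rewrite big_ord0 subr0 => L0x Hx; split; first by exists x; rewrite ?add0r.
  by move=> j; have := Hx (enum_val j); rewrite big_ord0 addr0.
move=> [[y L0y <-] Hx]; exists (fun _ => 0); rewrite big_ord0 subr0 add0r.
split => // i; rewrite big_ord0 addr0.
by have := Hx (enum_rank i); rewrite /xs /= enum_rankK add0r.
Qed.

End shadow_elimination.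

Lemma big_supp (V : zmodType) n (P P' : pred 'I_n) (F : 'I_n -> V) :
  {subset P <= P'} -> (forall i, ~~ P i -> F i = 0) ->
  \sum_(i < n | P' i) F i = \sum_(i < n | P i) F i.
Proof.
move=> PP' F0; rewrite big_rmcond ?[RHS]big_rmcond // => i P'i.
by apply: F0; apply: contra P'i; exact: PP'.
Qed.

Definition ext_nat (T : Type) n (F : 'I_n -> T) (d : T) (r : nat) : T :=
  if insub r is Some i then F i else d.

Definition join_nat (T : Type) k l (F : 'I_k -> T) (G : 'I_l -> T) (d : T) (r : nat) : T :=
  if (r < k)%N then ext_nat F d r else ext_nat G d (r - k).

Lemma join_natl T k l (F : 'I_k -> T) (G : 'I_l -> T) d (i : 'I_k) : join_nat F G d i = F i.
Proof. by rewrite /join_nat ltn_ord /ext_nat valK. Qed.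

Lemma join_natr T k l (F : 'I_k -> T) (G : 'I_l -> T) d (j : 'I_l) :
  join_nat F G d (k + j) = G j.
Proof. by rewrite /join_nat ltnNge leq_addr /= addKn /ext_nat valK. Qed.

Section hull_plus.
Variables (R : realType) (X : tvsType R) (k l : nat) (u : 'I_k -> X) (v : 'I_l -> X).
Variable X0 : set X.
Hypothesis X0_sub : closed_subspace X0.

Lemma subset_hull_plus (P P' : pred 'I_k) (Q Q' : pred 'I_l) :
  {subset P <= P'} -> {subset Q <= Q'} -> hull_plus P Q u v X0 `<=` hull_plus P' Q' u v X0.
Proof.
move=> PP' QQ' _ [lam [mu [x0 [lam_ge0 [lam1 [mu_ge0 [X0x0 ->]]]]]]].
pose lam' i := if P i then lam i else 0; pose mu' j := if Q j then mu j else 0.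
have lamE : \sum_(i < k | P' i) lam' i *: u i = \sum_(i < k | P i) lam i *: u i.
  rewrite (big_supp PP') => [|i /negbTE Pi]; last by rewrite /lam' Pi scale0r.
  by apply: eq_bigr => i Pi; rewrite /lam' Pi.
have muE : \sum_(j < l | Q' j) mu' j *: v j = \sum_(j < l | Q j) mu j *: v j.
  rewrite (big_supp QQ') => [|j /negbTE Qj]; last by rewrite /mu' Qj scale0r.
  by apply: eq_bigr => j Qj; rewrite /mu' Qj.
exists lam', mu', x0; split; first by move=> i _; rewrite /lam'; case: ifP => // /lam_ge0.
split.
  rewrite (big_supp PP') => [|i /negbTE Pi]; last by rewrite /lam' Pi.
  by rewrite -lam1; apply: eq_bigr => i Pi; rewrite /lam' Pi.
split; first by move=> j _; rewrite /mu'; case: ifP => // /mu_ge0.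
by split => //; rewrite lamE muE.
Qed.

Lemma hull_plus_addX0 (P : pred 'I_k) (Q : pred 'I_l) x y :
  hull_plus P Q u v X0 x -> X0 y -> hull_plus P Q u v X0 (x + y).
Proof.
move=> [lam [mu [x0 [lam_ge0 [lam1 [mu_ge0 [X0x0 ->]]]]]]] X0y.
exists lam, mu, (x0 + y); do 4?split => //; last by rewrite addrA.
exact: closed_subspaceD.
Qed.

Lemma hull_plus_addv (P : pred 'I_k) (Q : pred 'I_l) x j :
  Q j -> hull_plus P Q u v X0 x -> hull_plus P Q u v X0 (x + v j).
Proof.
move=> Qj [lam [mu [x0 [lam_ge0 [lam1 [mu_ge0 [X0x0 ->]]]]]]].
exists lam, (fun j' => mu j' + (j' == j)%:R), x0; do 2!split => //; split.
  by move=> j' Qj'; rewrite addr_ge0 ?ler0n ?mu_ge0.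
split => //.
have -> : \sum_(j' < l | Q j') (mu j' + (j' == j)%:R) *: v j' =
    \sum_(j' < l | Q j') mu j' *: v j' + v j.
  under eq_bigr do rewrite scalerDl; rewrite big_split /=; congr (_ + _).
  rewrite (bigD1 j) //= eqxx scale1r big1 ?addr0 // => j' /andP[_ /negbTE ->].
  by rewrite scale0r.
by rewrite addrA [RHS]addrAC.
Qed.

Lemma hull_plus_u (P : pred 'I_k) (Q : pred 'I_l) i :
  P i -> hull_plus P Q u v X0 (u i).
Proof.
have [_ [X00 _]] := X0_sub; move=> Pi; exists (fun i' => (i' == i)%:R), (fun=> 0), 0.
split; first by move=> i' _; exact: ler0n.
split; first by rewrite (bigD1 i) //= eqxx big1 ?addr0 // => i' /andP[_ /negbTE ->].
split=> //; split=> //; rewrite addr0 [X in _ + X]big1 => [|j _]; last exact: scale0r.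
by rewrite (bigD1 i) //= eqxx scale1r big1 ?addr0 // => i' /andP[_ /negbTE ->]; rewrite scale0r.
Qed.

Section hull_plus_shadow.
Variables (P : pred 'I_k) (Q : pred 'I_l).

(* Generators outside P and Q are replaced by 0, so their coefficients are
   irrelevant. *)
Definition hull_gen : nat -> X :=
  join_nat (fun i => if P i then u i else 0) (fun j => if Q j then v j else 0) 0.

(* [inl r] encodes t_r >= 0; [inr true] and [inr false] together say that the
   t_i, i in P, sum to 1. *)
Definition hull_coef (e : 'I_(k + l) + bool) (r : nat) : R :=
  match e with
  | inl r' => if r == r' then -1 else 0
  | inr up => if join_nat P (fun _ : 'I_l => false) false r then (if up then 1 else -1) else 0
  end.

Definition hull_bound (e : 'I_(k + l) + bool) : R :=
  if e is inr up then (if up then 1 else -1) else 0.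

Lemma sum_hull_gen (t : nat -> R) : \sum_(r < k + l) t r *: hull_gen r =
  \sum_(i < k | P i) t i *: u i + \sum_(j < l | Q j) t (k + j)%N *: v j.
Proof.
rewrite big_split_ord /= !(big_mkcond P) !(big_mkcond Q); congr (_ + _).
  by apply: eq_bigr => i _; rewrite /hull_gen join_natl; case: ifP; rewrite ?scaler0.
by apply: eq_bigr => j _; rewrite /hull_gen join_natr; case: ifP; rewrite ?scaler0.
Qed.

Lemma sum_hull_coef_coord (t : nat -> R) r' :
  \sum_(r < k + l) hull_coef (inl r') r * t r = - t r'.
Proof.
rewrite (bigD1 r') //= eqxx mulN1r big1 ?addr0 // => r rr'.
by move: rr'; rewrite -val_eqE => /negbTE ->; rewrite mul0r.
Qed.

Lemma sum_hull_coef_simplex (t : nat -> R) up :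
  \sum_(r < k + l) hull_coef (inr up) r * t r = (if up then 1 else -1) * \sum_(i < k | P i) t i.
Proof.
rewrite big_split_ord /= [X in _ + X]big1 ?addr0 => [|j _]; last first.
  by rewrite join_natr mul0r.
rewrite mulr_sumr [RHS]big_mkcond; apply: eq_bigr => i _.
by rewrite join_natl; case: (P i); rewrite ?mul0r ?mulr0.
Qed.

Lemma hull_plus_shadow : hull_plus P Q u v X0 =
  shadow (k + l) X0 hull_gen (fun _ _ => 0) hull_coef hull_bound.
Proof.
apply/seteqP; split => x.
- move=> [lam [mu [x0 [lam_ge0 [lam1 [mu_ge0 [X0x0 ->]]]]]]].
  pose t := join_nat (fun i => if P i then lam i else 0) (fun j => if Q j then mu j else 0) 0.
  have t_ge0 (r : 'I_(k + l)) : 0 <= t r.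
    case: (splitP r) => [i ->|j ->]; rewrite /t ?join_natl ?join_natr; case: ifP => //.
      exact: lam_ge0.
    exact: mu_ge0.
  exists t; split.
    rewrite sum_hull_gen.
    have -> : \sum_(i < k | P i) t i *: u i = \sum_(i < k | P i) lam i *: u i.
      by apply: eq_bigr => i Pi; rewrite /t join_natl Pi.
    have -> : \sum_(j < l | Q j) t (k + j)%N *: v j = \sum_(j < l | Q j) mu j *: v j.
      by apply: eq_bigr => j Qj; rewrite /t join_natr Qj.
    by rewrite addrC addKr.
  case=> [r'|up]; first by rewrite sum_hull_coef_coord add0r oppr_le0.
  rewrite sum_hull_coef_simplex; have -> : \sum_(i < k | P i) t i = 1.
    by rewrite -lam1; apply: eq_bigr => i Pi; rewrite /t join_natl Pi.
  by rewrite mulr1 add0r.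
- move=> [t [X0t Ht]].
  exists (fun i => t i), (fun j => t (k + j)%N), (x - \sum_(r < k + l) t r *: hull_gen r).
  have coord_ge0 (r : 'I_(k + l)) : 0 <= t r.
    by have := Ht (inl r); rewrite sum_hull_coef_coord add0r oppr_le0.
  split; first by move=> i _; exact: (coord_ge0 (lshift l i)).
  split.
    have := Ht (inr true); have := Ht (inr false).
    by rewrite !sum_hull_coef_simplex !add0r /=; lra.
  split; first by move=> j _; exact: (coord_ge0 (rshift k j)).
  by split => //; rewrite -sum_hull_gen addrC subrK.
Qed.

Lemma hull_plus_gen_polyhedral : gen_polyhedral (hull_plus P Q u v X0).
Proof.
rewrite hull_plus_shadow; apply: (@shadow_form_gen_polyhedral _ _ (k + l) hull_gen).
exists X0, ('I_(k + l) + bool)%type, (fun _ _ => 0), hull_coef, hull_bound; split => //.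
by move=> _; split => [?|r x y]; [exact: cst_continuous | rewrite mulr0 addr0].
Qed.

End hull_plus_shadow.

End hull_plus.

Section argmin_hull_plus.
Variables (R : realType) (X : tvsType R) (k l : nat) (u : 'I_k -> X) (v : 'I_l -> X).
Variables (X0 : set X) (xs : {linear X -> R^o}).
Hypothesis X0_sub : closed_subspace X0.

Let D := hull_plus predT predT u v X0.

Hypothesis sol : argmin_set xs D !=set0.

Lemma xs_X0_eq0 y : X0 y -> xs y = 0.
Proof.
move=> X0y; have [x [Dx x_min]] := sol.
have X0Ny : X0 (- y) by rewrite -scaleN1r; exact: closed_subspaceZ.
have := x_min _ (hull_plus_addX0 X0_sub Dx X0y).
have := x_min _ (hull_plus_addX0 X0_sub Dx X0Ny).
by rewrite !linearD linearN /=; lra.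
Qed.

Lemma xs_v_ge0 j : 0 <= xs (v j).
Proof.
have [x [Dx x_min]] := sol.
have Dxv : D (x + v j) by exact: hull_plus_addv.
have := x_min _ Dxv.
by rewrite linearD /=; lra.
Qed.

Lemma xs_hull_plus (P : pred 'I_k) (Q : pred 'I_l) lam mu x0 : X0 x0 ->
  xs (\sum_(i < k | P i) lam i *: u i + \sum_(j < l | Q j) mu j *: v j + x0) =
  \sum_(i < k | P i) lam i * xs (u i) + \sum_(j < l | Q j) mu j * xs (v j).
Proof.
move=> X0x0; rewrite !linearD !linear_sum xs_X0_eq0 // addr0.
by congr (_ + _); apply: eq_bigr => ? _; rewrite linearZ.
Qed.

Variable i0 : 'I_k.
Hypothesis i0_min : forall i, xs (u i0) <= xs (u i).

Lemma xs_hull_excess lam mu x0 : \sum_(i < k) lam i = 1 -> X0 x0 ->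
  xs (\sum_(i < k | predT i) lam i *: u i + \sum_(j < l | predT j) mu j *: v j + x0) =
  xs (u i0) + (\sum_(i < k) lam i * (xs (u i) - xs (u i0)) + \sum_(j < l) mu j * xs (v j)).
Proof.
move=> lam1 X0x0; rewrite xs_hull_plus // addrA; congr (_ + _).
under [in RHS]eq_bigr do rewrite mulrBr.
by rewrite sumrB -mulr_suml lam1 mul1r addrC subrK.
Qed.

Let I := [pred i | [forall i', xs (u i) <= xs (u i')]].
Let J := [pred j | xs (v j) == 0].

Lemma excess_le0_supp lam mu : (forall i, 0 <= lam i) -> (forall j, 0 <= mu j) ->
  \sum_(i < k) lam i * (xs (u i) - xs (u i0)) + \sum_(j < l) mu j * xs (v j) <= 0 ->
  (forall i, ~~ I i -> lam i = 0) /\ (forall j, ~~ J j -> mu j = 0).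
Proof.
move=> lam_ge0 mu_ge0 excess_le0.
have lam_terms i : 0 <= lam i * (xs (u i) - xs (u i0)) by rewrite mulr_ge0 ?subr_ge0.
have mu_terms j : 0 <= mu j * xs (v j) by rewrite mulr_ge0 ?xs_v_ge0.
have lam_sum_ge0 : 0 <= \sum_(i < k) lam i * (xs (u i) - xs (u i0)) by exact: sumr_ge0.
have mu_sum_ge0 : 0 <= \sum_(j < l) mu j * xs (v j) by exact: sumr_ge0.
have lam_sum0 : \sum_(i < k) lam i * (xs (u i) - xs (u i0)) = 0 by lra.
have mu_sum0 : \sum_(j < l) mu j * xs (v j) = 0 by lra.
split=> [i /forallPn [i'] | j vj_neq0].
  rewrite -ltNge => ui'_lt.
  have /eqP := @psumr_eq0P _ _ _ _ (fun i _ => lam_terms i) lam_sum0 i isT.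
  rewrite mulf_eq0 subr_eq0 => /orP[/eqP //|/eqP ui].
  by move: ui'_lt; rewrite ui ltNge i0_min.
have /eqP := @psumr_eq0P _ _ _ _ (fun j _ => mu_terms j) mu_sum0 j isT.
by rewrite mulf_eq0 => /orP[/eqP // | vj0]; rewrite /J /= vj0 in vj_neq0.
Qed.

Lemma min_le_xs_hull x : D x -> xs (u i0) <= xs x.
Proof.
move=> [lam [mu [x0 [lam_ge0 [lam1 [mu_ge0 [X0x0 ->]]]]]]].
rewrite xs_hull_excess // lerDl addr_ge0 //; apply: sumr_ge0 => ? _; apply: mulr_ge0.
- exact: lam_ge0.
- by rewrite subr_ge0.
- exact: mu_ge0.
- exact: xs_v_ge0.
Qed.

Lemma argmin_sub_hull : argmin_set xs D `<=` hull_plus I J u v X0.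
Proof.
move=> _ [[lam [mu [x0 [lam_ge0 [lam1 [mu_ge0 [X0x0 ->]]]]]]] x_min].
have Du0 : D (u i0) by exact: hull_plus_u.
have [lam0 mu0] : (forall i, ~~ I i -> lam i = 0) /\ (forall j, ~~ J j -> mu j = 0).
  apply: excess_le0_supp => [i | j |]; [exact: lam_ge0 | exact: mu_ge0 |].
  by have := x_min _ Du0; rewrite xs_hull_excess // gerDl.
exists lam, mu, x0; split; first by move=> i _; exact: lam_ge0.
split; first by rewrite -lam1; apply/esym/big_supp => [i _ // | i /lam0].
split; first by move=> j _; exact: mu_ge0.
split => //; congr (_ + _ + _).
  by apply: big_supp => [i _ // | i /lam0 ->]; rewrite scale0r.
by apply: big_supp => [j _ // | j /mu0 ->]; rewrite scale0r.
Qed.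

Lemma hull_sub_argmin : hull_plus I J u v X0 `<=` argmin_set xs D.
Proof.
move=> x IJx; split; first exact: subset_hull_plus IJx.
move=> y /min_le_xs_hull; apply: le_trans.
case: IJx => lam [mu [x0 [_ [lam1 [_ [X0x0 ->]]]]]].
rewrite xs_hull_plus //.
have -> : \sum_(j < l | J j) mu j * xs (v j) = 0 by apply: big1 => j /eqP ->; rewrite mulr0.
have -> : \sum_(i < k | I i) lam i * xs (u i) = \sum_(i < k | I i) lam i * xs (u i0).
  by apply: eq_bigr => i /forallP Ii; congr (_ * _); apply/eqP; rewrite eq_le Ii i0_min.
by rewrite addr0 -mulr_suml lam1 mul1r.
Qed.

Lemma argmin_hull_plus : argmin_set xs D =
  hull_plus [pred i | [forall i', xs (u i) <= xs (u i')]] [pred j | xs (v j) == 0] u v X0.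
Proof. by apply/seteqP; split; [exact: argmin_sub_hull | exact: hull_sub_argmin]. Qed.

End argmin_hull_plus.

Unset Implicit Arguments.

Theorem proposition3p6 (R : realType) (X : tvsType R) (hX : hausdorff_space X)
  (k l : nat) (hk : (0 < k)%N) (u : 'I_k -> X) (v : 'I_l -> X) (X0 : set X)
  (hX0 : closed_subspace X0)
  (hD : hull_plus predT predT u v X0 !=set0)
  (xs : {linear X -> R^o}) (hxs : continuous (xs : X -> R^o))
  (hsol : argmin_set xs (hull_plus predT predT u v X0) !=set0) :
  let I := [pred i0 : 'I_k | [forall i : 'I_k, xs (u i0) <= xs (u i)]] in
  let J := [pred j0 : 'I_l | xs (v j0) == 0] in
  argmin_set xs (hull_plus predT predT u v X0) = hull_plus I J u v X0 /\
  gen_polyhedral (argmin_set xs (hull_plus predT predT u v X0)).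
Proof.
move=> I J.
have [i0 _ i0_min] := @arg_minP _ _ 'I_k (Ordinal hk) predT (fun i => xs (u i)) isT.
have argminE : argmin_set xs (hull_plus predT predT u v X0) = hull_plus I J u v X0.
  exact: (argmin_hull_plus hX0 hsol (fun i => i0_min i isT)).
by split => //; rewrite argminE; exact: hull_plus_gen_polyhedral.
Qed.
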